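(* For an integer $q\geq 2$ and arbitrary positive integers $c$ and $d$, $$P\big(S(c,\underbrace{d,\dots,d}_{q}),\lambda\big)=\mathbf{P}_d^{\,q-1}\left(\mathbf{P}_{c+d+1}-(q-1)\mathbf{P}_c\mathbf{P}_{d-1}\right).$$
   Context: For a graph $G$, $P(G,\lambda)=\det(\lambda I-A(G))$ is the characteristic polynomial of its adjacency matrix $A(G)$. $\mathbf{P}_m$ denotes $P(P_m,\lambda)$, the characteristic polynomial of the path $P_m$ on $m$ vertices, with the convention $\mathbf{P}_0=1$. For positive integers $c_1,\dots,c_m$, the starlike tree $S(c_1,\dots,c_m)$ is obtained from disjoint paths $P_{c_1+1},\dots,P_{c_m+1}$ by identifying one end vertex of each path into a single vertex (the center); the resulting pendant paths are the branches, of lengths $c_1,\dots,c_m$. *)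

From mathcomp Require Import all_boot all_order all_algebra.
Set Implicit Arguments. Unset Strict Implicit. Unset Printing Implicit Defensive.
Import GRing.Theory.
Local Open Scope ring_scope.

Definition adj_mx (n : nat) (E : seq (nat * nat)) : 'M[int]_n :=
  \matrix_(i < n, j < n)
    (((nat_of_ord i, nat_of_ord j) \in E) || ((nat_of_ord j, nat_of_ord i) \in E))%:R.

Definition charpoly_graph (n : nat) (E : seq (nat * nat)) : {poly int} :=
  char_poly (adj_mx n E).

Definition path_edges (m : nat) : seq (nat * nat) :=
  [seq (k, k.+1) | k <- iota 0 m.-1].

(* bold P_m; for m = 0 this is the char. poly of the empty matrix, i.e. 1. *)
Definition Ppath (m : nat) : {poly int} := charpoly_graph m (path_edges m).

(* Starlike tree S(c_1,...,c_m): vertex 0 is the center; branch i (0-based)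
   occupies vertices start i, start i + 1, ..., start i + c_i - 1, where
   start i = 1 + c_1 + ... + c_i (previous branches), listed by increasing
   distance from the center. *)
Definition branch_start (cs : seq nat) (i : nat) : nat := 1 + sumn (take i cs).

Definition branch_edges (cs : seq nat) (i : nat) : seq (nat * nat) :=
  (0%N, branch_start cs i) ::
  [seq (branch_start cs i + k, (branch_start cs i + k).+1)%N | k <- iota 0 (nth 0%N cs i).-1].

Definition starlike_edges (cs : seq nat) : seq (nat * nat) :=
  flatten [seq branch_edges cs i | i <- iota 0 (size cs)].

Definition starlike_order (cs : seq nat) : nat := (1 + sumn cs)%N.

Definition P_starlike (cs : seq nat) : {poly int} :=
  charpoly_graph (starlike_order cs) (starlike_edges cs).

(* Expanding the determinant along a leaf v with neighbour u gives
   P(G) = lambda P(G - v) - P(G - v - u); iterating this along a pendant path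
   with e vertices attached at u gives P(G) = P_e P(H) - P_(e-1) P(H - u).
   Number the vertices of S(c, d, ..., d) as in [starlike_edges]: the center,
   the c-branch, then the d-branches one after the other, so every initial
   segment of vertices induces a subtree.  Let G_j be the subtree made of the
   center, the c-branch and the first j d-branches.  Deleting the center from
   G_j leaves the disjoint paths P_c, P_d, ..., P_d, hence
   P(G_(j+1)) = P_d P(G_j) - P_(d-1) P_c P_d^j with P(G_0) = P_(c+1); solving
   this recursion and using P_(c+d+1) = P_(c+1) P_d - P_c P_(d-1) gives the
   formula. *)

From mathcomp Require Import all_boot all_order all_algebra.
From mathcomp Require Import zify ring.
Set Implicit Arguments. Unset Strict Implicit. Unset Printing Implicit Defensive.
Import GRing.Theory.
Local Open Scope ring_scope.

Lemma bump_small h i : (i < h)%N -> bump h i = i.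
Proof. by move=> lt_ih; rewrite /bump leqNgt lt_ih. Qed.

Lemma bump_ltnS n h i : (h <= n)%N -> (i < n)%N -> (bump h i < n.+1)%N.
Proof. by rewrite /bump; case: (leqP h i) => /=; lia. Qed.

Lemma expand_det_leaf (R : comPzRingType) n (A : 'M[R]_n.+2) (k : 'I_n.+1) x :
    (forall j, A ord_max j = x *+ (j == ord_max) - (j == lift ord_max k)%:R) ->
    (forall i, A i ord_max = x *+ (i == ord_max) - (i == lift ord_max k)%:R) ->
  \det A = x * \det (row' ord_max (col' ord_max A))
           - \det (row' k (col' k (row' ord_max (col' ord_max A)))).
Proof.
move=> rowA colA; have k_max : lift ord_max k != ord_max by rewrite eq_sym neq_lift.
rewrite (expand_det_row _ ord_max) (bigD1 ord_max) // (bigD1 (lift ord_max k)) //=.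
rewrite big1 ?addr0 => [|j /andP[/negbTE j_max /negbTE j_k]]; last first.
  by rewrite rowA j_max j_k subr0 mul0r.
rewrite !rowA !eqxx (negbTE k_max) (negbTE (neq_lift _ _)) /= mulr1n mulr0n subr0 sub0r mulN1r.
rewrite /cofactor -signr_odd addnn odd_double mul1r; congr (_ - _).
set B := row' ord_max (col' (lift ord_max k) A).
have colB i : B i ord_max = - (i == k)%:R.
  rewrite !mxE; set j := lift (lift _ _) _.
  have -> : j = ord_max by apply: val_inj; rewrite /= (bump_small (ltn_ord k)) /bump leq_ord.
  by rewrite colA [_ == ord_max]eq_sym (negbTE (neq_lift _ _)) (inj_eq lift_inj) sub0r.
rewrite (expand_det_col _ ord_max) (bigD1 k) //= big1 ?addr0 => [|i /negbTE i_k]; last first.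
  by rewrite colB i_k oppr0 mul0r.
rewrite colB eqxx mulN1r /cofactor /= bump_small // mulrN mulrA -exprD -signr_odd.
have -> : (n.+1 + k + (k + n) = (n + k).*2.+1)%N by rewrite -addnn; lia.
rewrite /= odd_double expr1 mulN1r opprK; congr (\det _).
apply/matrixP => a b; rewrite !mxE; congr (A _ _); apply: val_inj.
rewrite /= (bump_small (ltn_ord k)) (bump_small (ltn_ord b)) [RHS]bump_small //.
exact: bump_ltnS (leq_ord k) (ltn_ord b).
Qed.

Definition relmx n (r : rel nat) : 'M[int]_n := \matrix_(i < n, j < n) (r i j)%:R.

Definition rel_charpoly n (r : rel nat) : {poly int} := char_poly (relmx n r).

Definition rel_del (k : nat) (r : rel nat) : rel nat := fun x y => r (bump k x) (bump k y).

Lemma rel_del0 r x y : rel_del 0 r x y = r x.+1 y.+1.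
Proof. by []. Qed.

Lemma eq_rel_charpoly n r r' :
    (forall i j, (i < n)%N -> (j < n)%N -> r i j = r' i j) ->
  rel_charpoly n r = rel_charpoly n r'.
Proof.
by move=> eq_r; rewrite /rel_charpoly; congr char_poly; apply/matrixP => i j; rewrite !mxE eq_r.
Qed.

Lemma rel_charpoly_block m n r :
    (forall i j, (i < m)%N -> (j < n)%N -> r (m + j)%N i = false) ->
  rel_charpoly (m + n) r =
    rel_charpoly m r * rel_charpoly n (fun i j => r (m + i)%N (m + j)%N).
Proof.
move=> no_back; rewrite /rel_charpoly /char_poly -[char_poly_mx _]submxK.
have -> : dlsubmx (char_poly_mx (relmx (m + n) r)) = 0.
  by apply/matrixP => i j; rewrite !mxE /= no_back // eq_rlshift subr0.
by rewrite det_ublock; congr (_ * _); congr (\det _); apply/matrixP => i j;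
  rewrite !mxE eq_shift.
Qed.

Lemma row'_col'_char_poly_relmx n r (k : 'I_n.+1) :
  row' k (col' k (char_poly_mx (relmx n.+1 r))) = char_poly_mx (relmx n (rel_del k r)).
Proof. by apply/matrixP => i j; rewrite !mxE (inj_eq lift_inj). Qed.

Lemma rel_charpoly_leaf n (k : 'I_n.+1) r : symmetric r ->
    (forall u, (u <= n.+1)%N -> r n.+1 u = (u == k)) ->
  rel_charpoly n.+2 r = 'X * rel_charpoly n.+1 r - rel_charpoly n (rel_del k r).
Proof.
move=> r_sym leaf; rewrite [LHS]/rel_charpoly /char_poly.
have eq_lift_max (j : 'I_n.+2) : (j == lift ord_max k) = (j == k :> nat).
  by rewrite -val_eqE /= bump_small.
rewrite (expand_det_leaf (k := k) (x := 'X)) => [|j|i].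
- rewrite !row'_col'_char_poly_relmx -!/(char_poly _) -!/(rel_charpoly _ _).
  congr (_ * _ - _); apply: eq_rel_charpoly => i j i_lt j_lt /=.
    by rewrite /rel_del !bump_small.
  by rewrite /rel_del !(bump_small (bump_ltnS (leq_ord k) _)).
- by rewrite !mxE polyC_natr leaf ?leq_ord // eq_sym eq_lift_max.
- by rewrite !mxE polyC_natr r_sym leaf ?leq_ord // eq_lift_max.
Qed.

Definition path_rel : rel nat := fun x y => (y == x.+1) || (x == y.+1).

Lemma path_rel_sym : symmetric path_rel.
Proof. by move=> x y; rewrite /path_rel orbC. Qed.

Definition edge_rel (E : seq (nat * nat)) : rel nat :=
  fun x y => ((x, y) \in E) || ((y, x) \in E).

Lemma edge_rel_sym E : symmetric (edge_rel E).
Proof. by move=> x y; rewrite /edge_rel orbC. Qed.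

Lemma charpoly_graphE n E : charpoly_graph n E = rel_charpoly n (edge_rel E).
Proof. by []. Qed.

Lemma mem_path_edges m i j : ((i, j) \in path_edges m) = (j == i.+1) && (i < m.-1)%N.
Proof.
apply/mapP/andP => [[k + [-> ->]]|[/eqP -> lt_im]]; first by rewrite mem_iota; lia.
by exists i => //; rewrite mem_iota; lia.
Qed.

Lemma Ppath_rel m : Ppath m = rel_charpoly m path_rel.
Proof.
rewrite /Ppath charpoly_graphE; apply: eq_rel_charpoly => i j lt_im lt_jm.
by rewrite /edge_rel /path_rel !mem_path_edges; lia.
Qed.

Lemma Ppath0 : Ppath 0 = 1.
Proof. by rewrite /Ppath /charpoly_graph /char_poly det_mx00. Qed.

Lemma Ppath1 : Ppath 1 = 'X.
Proof. by rewrite Ppath_rel /rel_charpoly /char_poly det_mx11 !mxE /= mulr1n subr0. Qed.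

Lemma PpathSS m : Ppath m.+2 = 'X * Ppath m.+1 - Ppath m.
Proof.
rewrite !Ppath_rel (@rel_charpoly_leaf m ord_max) => [|x y|u le_u]; last 2 first.
- exact: path_rel_sym.
- by rewrite /path_rel /=; lia.
congr (_ - _); apply: eq_rel_charpoly => i j lt_im lt_jm.
by rewrite /rel_del !bump_small.
Qed.

Lemma rel_charpoly_pendant_path n (k : 'I_n.+1) e r : symmetric r ->
    (forall i u, (i <= e)%N -> (u <= n.+1 + i)%N ->
       r (n.+1 + i)%N u = (u == if i == 0%N then k : nat else n + i)%N) ->
  rel_charpoly (n.+1 + e.+1) r =
    Ppath e.+1 * rel_charpoly n.+1 r - Ppath e * rel_charpoly n (rel_del k r).
Proof.
move=> r_sym pendant.
have step i : (0 < i <= e)%N ->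
    rel_charpoly (n.+1 + i.+1) r = 'X * rel_charpoly (n.+1 + i) r - rel_charpoly (n + i) r.
  case/andP=> i_gt0 le_ie; rewrite addnS !addSn.
  rewrite (@rel_charpoly_leaf (n + i) ord_max) // => [|u le_u]; last first.
    by rewrite (pendant i u) // (gtn_eqF i_gt0).
  congr (_ - _); apply: eq_rel_charpoly => x y lt_x lt_y.
  by rewrite /rel_del !bump_small.
have base : rel_charpoly (n.+1 + 1) r = 'X * rel_charpoly n.+1 r - rel_charpoly n (rel_del k r).
  rewrite addn1 (rel_charpoly_leaf (k := k)) // => u le_u.
  by have := pendant 0%N u (leq0n e); rewrite addn0; apply.
suff /(_ e (leqnn e)) : forall i, (i <= e)%N -> rel_charpoly (n.+1 + i.+1) r =
    Ppath i.+1 * rel_charpoly n.+1 r - Ppath i * rel_charpoly n (rel_del k r) by [].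
elim/ltn_ind => -[|[|i]] IH le_ie.
- by rewrite base Ppath1 Ppath0 mulrC mul1r.
- by rewrite step // base addn1 PpathSS Ppath1 Ppath0; ring.
rewrite step // -[(n + i.+2)%N]addSnnS !IH ?(ltnW le_ie) ?(ltnW (ltnW le_ie)) //.
by rewrite (PpathSS i.+1) (PpathSS i); ring.
Qed.

Lemma Ppath_add m e : Ppath (m.+1 + e.+1) = Ppath m.+1 * Ppath e.+1 - Ppath m * Ppath e.
Proof.
rewrite Ppath_rel (@rel_charpoly_pendant_path m ord_max) => [||i u _ le_u]; last 2 first.
- exact: path_rel_sym.
- by rewrite /path_rel; case: i le_u => [|i] le_u /=; lia.
rewrite (@eq_rel_charpoly m (rel_del ord_max path_rel) path_rel) => [|i j lt_im lt_jm].
  by rewrite -!Ppath_rel mulrC [Ppath e * _]mulrC.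
by rewrite /rel_del !bump_small.
Qed.

Section Starlike.

Variables c q d : nat.
Hypothesis c_gt0 : (0 < c)%N.

Local Notation cs := (c :: nseq q d).
Local Notation star := (edge_rel (starlike_edges cs)).

Lemma branch_start_nseq i : (i <= q)%N -> branch_start cs i.+1 = (1 + c + i * d)%N.
Proof. by move=> le_iq; rewrite /branch_start /= take_nseq // sumn_nseq mulnC addnA. Qed.

Lemma mem_starlike_edges x y :
  ((x, y) \in starlike_edges cs) <->
  [\/ (x < c)%N /\ y = x.+1,
      exists2 i, (i < q)%N & x = 0%N /\ y = (1 + c + i * d)%N
    | exists i k, [/\ (i < q)%N, (k.+1 < d)%N, x = (1 + c + i * d + k)%N & y = x.+1]].
Proof.
rewrite /starlike_edges; split.
- case/flatten_mapP => -[|i]; rewrite mem_iota add0n /= size_nseq ltnS => lt_i.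
  + rewrite in_cons => /orP[/eqP[-> ->]|/mapP[k]]; first by constructor 1.
    by rewrite mem_iota /branch_start /= => lt_k [-> ->]; constructor 1; lia.
  rewrite /branch_edges branch_start_nseq ?in_cons; last by lia.
  case/orP => [/eqP[-> ->]|/mapP[k]].
    by constructor 2; exists i.
  rewrite mem_iota add0n /= nth_nseq lt_i => lt_k [-> ->].
  by constructor 3; exists i, k; split => //; lia.
- case=> [[lt_xc ->]|[i lt_iq [-> ->]]|[i [k [lt_iq lt_kd -> ->]]]].
  + apply/flatten_mapP; exists 0%N; first by rewrite mem_iota.
    rewrite /branch_edges in_cons; case: x lt_xc => [|x] lt_xc; first by rewrite eqxx.
    by apply/orP; right; apply/mapP; exists x => //; rewrite mem_iota /=; lia.
  + apply/flatten_mapP; exists i.+1; first by rewrite mem_iota /= size_nseq; lia.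
    by rewrite /branch_edges branch_start_nseq ?mem_head // ltnW.
  + apply/flatten_mapP; exists i.+1; first by rewrite mem_iota /= size_nseq; lia.
    rewrite /branch_edges branch_start_nseq ?in_cons 1?ltnW //; apply/orP; right.
    by apply/mapP; exists k; rewrite // mem_iota /= nth_nseq lt_iq; lia.
Qed.

Lemma mul_add_neq_mul i j e : (0 < e < d)%N -> (j * d + e)%N <> (i * d)%N.
Proof.
case/andP=> e_gt0 lt_ed /(congr1 (modn^~ d)).
by rewrite modnMDl modnMl modn_small // => e0; rewrite e0 in e_gt0.
Qed.

Lemma star_trunk x y : (x < c.+1)%N -> (y < c.+1)%N -> star x y = path_rel x y.
Proof.
move=> lt_xc lt_yc; rewrite /edge_rel /path_rel; apply/idP/idP.
  by case/orP=> /mem_starlike_edges[[_ Ey]|[i _ [Ex Ey]]|[i [k [_ _ Ex Ey]]]]; lia.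
by case/orP=> /eqP E; apply/orP; [left|right]; apply/mem_starlike_edges; constructor 1; lia.
Qed.

Lemma star_branch_pendant j i u : (j < q)%N -> (i < d)%N -> (u <= (c + j * d).+1 + i)%N ->
  star ((c + j * d).+1 + i) u = (u == if i == 0%N then 0%N else c + j * d + i).
Proof.
move=> lt_jq lt_id le_u; rewrite /edge_rel; apply/idP/eqP.
- case/orP=> /mem_starlike_edges[[? ?]|[i' ? [? ?]]|[i' [k [? ? ? ?]]]]; try by case: eqP; lia.
    have := @mul_add_neq_mul i' j i; case: eqP; lia.
  have := @mul_add_neq_mul j i' k.+1; case: eqP; lia.
- case: eqP => [i0 ->|i_neq0 ->]; apply/orP; right; apply/mem_starlike_edges.
    by constructor 2; exists j; rewrite // i0; lia.
  by constructor 3; exists j, i.-1; split => //; lia.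
Qed.

Lemma star_branch_sep j i x : (j < q)%N -> (i < d)%N -> (x < c + j * d)%N ->
  star (c + j * d + i).+1 x.+1 = false.
Proof.
move=> lt_jq lt_id lt_x; apply/negbTE; rewrite /edge_rel negb_or.
by apply/andP; split; apply/negP => /mem_starlike_edges[[? ?]|[i' ? [? ?]]|[i' [k [? ? ? ?]]]];
  try lia; have := @mul_add_neq_mul j i' k.+1; lia.
Qed.

Lemma star_branch_path j x y : (j < q)%N -> (x < d)%N -> (y < d)%N ->
  star (c + j * d + x).+1 (c + j * d + y).+1 = path_rel x y.
Proof.
move=> lt_jq lt_xd lt_yd; rewrite /edge_rel /path_rel; apply/idP/idP.
  by case/orP=> /mem_starlike_edges[[? ?]|[i' ? [? ?]]|[i' [k [? ? ? ?]]]]; lia.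
case/orP=> /eqP E; apply/orP; [left|right]; apply/mem_starlike_edges; constructor 3.
  by exists j, x; split => //; lia.
by exists j, y; split => //; lia.
Qed.

Lemma star_del_center_charpoly j : (j <= q)%N ->
  rel_charpoly (c + j * d) (rel_del 0 star) = Ppath c * Ppath d ^+ j.
Proof.
elim: j => [|j IH] le_jq.
  rewrite mul0n addn0 expr0 mulr1 Ppath_rel; apply: eq_rel_charpoly => x y lt_x lt_y.
  by rewrite rel_del0 star_trunk // /path_rel !eqSS.
rewrite mulSnr addnA rel_charpoly_block => [|x i lt_x lt_i]; last first.
  by rewrite rel_del0 star_branch_sep.
rewrite IH 1?ltnW // exprSr mulrA (Ppath_rel d); congr (_ * _).
apply: eq_rel_charpoly => x y lt_x lt_y.
by rewrite !rel_del0 star_branch_path.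
Qed.

Hypothesis d_gt0 : (0 < d)%N.

Lemma star_charpoly_add_branch j : (j < q)%N ->
  rel_charpoly (c + j.+1 * d).+1 star =
    Ppath d * rel_charpoly (c + j * d).+1 star - Ppath d.-1 * (Ppath c * Ppath d ^+ j).
Proof.
move=> lt_jq; rewrite -(star_del_center_charpoly (ltnW lt_jq)).
have -> : (c + j.+1 * d).+1 = ((c + j * d).+1 + d.-1.+1)%N by rewrite prednK // mulSnr; lia.
rewrite (@rel_charpoly_pendant_path _ ord0) => [||i u le_i le_u].
- by rewrite prednK.
- exact: edge_rel_sym.
- by rewrite star_branch_pendant //; lia.
Qed.

Lemma star_charpoly j : (j < q)%N ->
  rel_charpoly (c + j.+1 * d).+1 star =
    Ppath d ^+ j * (Ppath d * Ppath c.+1 - j.+1%:R * Ppath d.-1 * Ppath c).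
Proof.
elim: j => [|j IH] lt_jq; rewrite star_charpoly_add_branch //.
  rewrite mul0n addn0 expr0 !mulr1 !mul1r (Ppath_rel c.+1); congr (_ * _ - _).
  by apply: eq_rel_charpoly => x y lt_x lt_y; rewrite star_trunk.
by rewrite IH 1?ltnW // exprS -!natr1; ring.
Qed.

End Starlike.

Theorem lemma3 (q c d : nat) (hq : (2 <= q)%N) (hc : (0 < c)%N) (hd : (0 < d)%N) :
  P_starlike (c :: nseq q d) =
  Ppath d ^+ q.-1 * (Ppath (c + d + 1) - (q.-1)%:R * Ppath c * Ppath d.-1).
Proof.
have order_eq : starlike_order (c :: nseq q d) = (c + q.-1.+1 * d).+1.
  by rewrite /starlike_order /= sumn_nseq (prednK (ltnW hq)); lia.
have path_eq : Ppath (c + d + 1) = Ppath d * Ppath c.+1 - Ppath d.-1 * Ppath c.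
  rewrite (_ : c + d + 1 = c.+1 + d.-1.+1)%N; last by rewrite (prednK hd) addn1.
  by rewrite Ppath_add (prednK hd) mulrC [Ppath c * _]mulrC.
have lt_q : (q.-1 < q)%N by rewrite prednK // ltnW.
rewrite /P_starlike charpoly_graphE order_eq (star_charpoly hc hd lt_q) path_eq.
by rewrite -natr1; ring.
Qed.
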